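(* For $p_q\in(0,1)$, $p_a\in[0,1]$ let $$\mathbf{R}(p_q,p_a)=\Big\{(\lambda_p,\lambda_s)\in[0,1]^2:\ \lambda_s< p_q f_{sd}\Big[1-\frac{\lambda_p}{f_{pd}+p_a f_{ps}(1-f_{pd})}\Big],\ \lambda_p<\frac{f_{sd}(1-p_q)[f_{pd}+p_a f_{ps}(1-f_{pd})]}{f_{sd}(1-p_q)+p_a f_{ps}(1-f_{pd})}\Big\}.$$ Then $$\bigcup_{p_q\in(0,1),\,p_a\in[0,1]}\mathbf{R}(p_q,p_a)=\Big\{(\lambda_p,\lambda_s)\in[0,1]^2:\ \lambda_s<f_{sd}-\frac{f_{sd}+f_{ps}(1-f_{pd})}{f_{pd}+f_{ps}(1-f_{pd})}\,\lambda_p\Big\}.$$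
   Context: Constants $f_{pd},f_{ps},f_{sd}\in(0,1)$ with $f_{pd}<f_{sd}$ are link success probabilities (PU→destination, PU→SU, SU→destination). $\mathbf{R}(p_q,p_a)$ is the stable throughput region of the cognitive cooperative system under the randomized service policy with queue-selection probability $p_q$ and relay admission probability $p_a$. *)

From Stdlib Require Import Reals.
Open Scope R_scope.

Definition in_unit_square (lp ls : R) : Prop :=
  0 <= lp <= 1 /\ 0 <= ls <= 1.

Definition region (fpd fps fsd pq pa : R) (lp ls : R) : Prop :=
  in_unit_square lp ls /\
  ls < pq * fsd * (1 - lp / (fpd + pa * fps * (1 - fpd))) /\
  lp < fsd * (1 - pq) * (fpd + pa * fps * (1 - fpd))
       / (fsd * (1 - pq) + pa * fps * (1 - fpd)).

Definition union_region (fpd fps fsd : R) (lp ls : R) : Prop :=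
  in_unit_square lp ls /\
  ls < fsd - (fsd + fps * (1 - fpd)) / (fpd + fps * (1 - fpd)) * lp.

(* For a fixed admission probability the two constraints of R(p_q, p_a), once
   cleared of denominators, read  ls (p+c) < p_q K  and  c lp < (1 - p_q) K  with
   K = f_sd (p + c - lp), p = f_pd and c = p_a f_ps (1 - f_pd).  Adding them
   eliminates p_q, and conversely any slack in the sum can be shared out by a
   suitable p_q; this gives the half-plane  ls < f_sd - (f_sd + c)/(p + c) lp.
   Since f_pd < f_sd its slope decreases in c, so p_a = 1 yields the largest
   region and the union is the half-plane for c = f_ps (1 - f_pd). *)
From Stdlib Require Import Reals Lra Psatz.
Open Scope R_scope.

Lemma Rlt_div_r_iff (x y z : R) : 0 < z -> (x < y / z <-> x * z < y).
Proof.
  intros Hz; split; intros H.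
  - apply (Rmult_lt_compat_r z) in H; [|exact Hz].
    replace (y / z * z) with y in H by (field; lra); exact H.
  - apply (Rmult_lt_reg_r z); [exact Hz|].
    replace (y / z * z) with y by (field; lra); exact H.
Qed.

Lemma exists_weight_split (A B K : R) :
  0 <= A -> 0 <= B -> A + B < K ->
  exists t, 0 < t < 1 /\ A < t * K /\ B < (1 - t) * K.
Proof.
  intros HA HB HK.
  set (t := (A + K - B) / (2 * K)).
  assert (HtK : t * K = (A + K - B) / 2) by (unfold t; field; lra).
  exists t.
  assert (Hsplit : A < t * K /\ B < (1 - t) * K) by (split; nra).
  split; [split; nra | exact Hsplit].
Qed.

Section FixedAdmission.

Variables p c s lp ls : R.
Hypotheses (Hp : 0 < p) (Hs : 0 < s) (Hc : 0 <= c) (Hlp : 0 <= lp).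

Lemma secondary_bound_iff (pq : R) :
  ls < pq * s * (1 - lp / (p + c)) <-> ls * (p + c) < pq * (s * (p + c - lp)).
Proof.
  replace (pq * s * (1 - lp / (p + c))) with (pq * (s * (p + c - lp)) / (p + c))
    by (field; lra).
  apply Rlt_div_r_iff; lra.
Qed.

Lemma primary_bound_iff (pq : R) : pq < 1 ->
  lp < s * (1 - pq) * (p + c) / (s * (1 - pq) + c)
  <-> c * lp < (1 - pq) * (s * (p + c - lp)).
Proof.
  intros Hpq.
  assert (Hden : 0 < s * (1 - pq) + c) by nra.
  rewrite Rlt_div_r_iff by exact Hden.
  split; intros; nra.
Qed.

Lemma union_bound_iff :
  ls < s - (s + c) / (p + c) * lp <-> ls * (p + c) + c * lp < s * (p + c - lp).
Proof.
  replace (s - (s + c) / (p + c) * lp) with ((s * (p + c - lp) - c * lp) / (p + c))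
    by (field; lra).
  rewrite Rlt_div_r_iff by lra.
  lra.
Qed.

Lemma union_over_pq_iff : 0 <= ls ->
  (exists pq, 0 < pq < 1 /\ ls < pq * s * (1 - lp / (p + c))
              /\ lp < s * (1 - pq) * (p + c) / (s * (1 - pq) + c))
  <-> ls < s - (s + c) / (p + c) * lp.
Proof.
  intros Hls; rewrite union_bound_iff.
  split.
  - intros (pq & Hpq & Hsec & Hpri).
    apply secondary_bound_iff in Hsec.
    apply primary_bound_iff in Hpri; [|lra].
    lra.
  - intros Hsum.
    destruct (exists_weight_split (ls * (p + c)) (c * lp) (s * (p + c - lp)))
      as (pq & Hpq & Hsec & Hpri); [nra | nra | exact Hsum |].
    exists pq; split; [exact Hpq|].
    rewrite secondary_bound_iff, primary_bound_iff by lra.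
    split; assumption.
Qed.

End FixedAdmission.

Lemma shifted_ratio_antitone (p s c c' : R) :
  0 < p <= s -> 0 <= c <= c' -> (s + c') / (p + c') <= (s + c) / (p + c).
Proof.
  intros Hps Hc.
  assert (Hdiff : (s + c) / (p + c) - (s + c') / (p + c')
                  = (s - p) * (c' - c) / ((p + c) * (p + c'))) by (field; lra).
  assert (0 <= (s - p) * (c' - c) / ((p + c) * (p + c'))).
  { apply Rmult_le_pos; [nra|].
    left; apply Rinv_0_lt_compat; nra. }
  lra.
Qed.

Theorem theorem2 (fpd fps fsd : R)
  (Hpd : 0 < fpd < 1) (Hps : 0 < fps < 1) (Hsd : 0 < fsd < 1)
  (Hlt : fpd < fsd) :
  forall lp ls : R,
    (exists pq pa : R, 0 < pq < 1 /\ 0 <= pa <= 1 /\ region fpd fps fsd pq pa lp ls)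
    <-> union_region fpd fps fsd lp ls.
Proof.
  intros lp ls.
  assert (Ha : 0 < fps * (1 - fpd)) by (apply Rmult_lt_0_compat; lra).
  unfold region, union_region.
  split.
  - intros (pq & pa & Hpq & Hpa & Hsq & Hbounds).
    split; [exact Hsq|].
    destruct Hsq as [[Hlp _] [Hls _]].
    apply Rlt_le_trans with
      (fsd - (fsd + pa * fps * (1 - fpd)) / (fpd + pa * fps * (1 - fpd)) * lp).
    + apply union_over_pq_iff; try lra; [nra | exists pq; tauto].
    + assert (Hc : 0 <= pa * fps * (1 - fpd) <= fps * (1 - fpd)) by nra.
      pose proof (shifted_ratio_antitone fpd fsd _ _ (conj (proj1 Hpd) (Rlt_le _ _ Hlt)) Hc).
      nra.
  - intros [Hsq Hbound].
    pose proof Hsq as [[Hlp _] [Hls _]].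
    apply union_over_pq_iff in Hbound as (pq & Hpq & Hbounds); try lra.
    exists pq, 1; rewrite !Rmult_1_l.
    split; [exact Hpq | split; [lra | split; [exact Hsq | exact Hbounds]]].
Qed.
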